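(* In the category of cartesian cubical sets, $\mathrm{I}^{\mathrm{I}}\cong \mathrm{I}+1$.
   Context: Let $\mathbb{B}$ be the category of finite sets $[n]=\{\bot,x_1,\dots,x_n,\top\}$ ($n\ge0$, $\bot\ne\top$) and functions preserving $\bot,\top$; the cartesian cube category is $\mathbb{C}_\times=\mathbb{B}^{op}$, and cartesian cubical sets are presheaves on $\mathbb{C}_\times$. $\mathrm{I}$ is the representable presheaf on $[1]$ (the $1$-cube), $1$ is the terminal presheaf, $\mathrm{I}^{\mathrm{I}}$ is the exponential and $+$ the coproduct. *)

From Stdlib Require Import FunctionalExtensionality ProofIrrelevance.
From mathcomp Require Import all_boot.

Set Implicit Arguments.
Unset Strict Implicit.
Unset Printing Implicit Defensive.

(* The category B: objects [n] = {bot, x_1, ..., x_n, top}, encoded as     *)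
(* 'I_(n+2) with bot = ord0 (value 0) and top = ord_max (value n+1).       *)

Definition pt (n : nat) := 'I_n.+2.
Definition bot {n : nat} : pt n := ord0.
Definition top {n : nat} : pt n := ord_max.

Definition Bhom (m n : nat) :=
  {f : {ffun pt m -> pt n} | (f bot == bot) && (f top == top)}.

Lemma Bhom_eq m n (f g : Bhom m n) : (forall i, val f i = val g i) -> f = g.
Proof. by move=> H; apply: val_inj; apply/ffunP. Qed.

Lemma Bid_proof n :
  let f := [ffun i : pt n => i] in (f bot == bot) && (f top == top).
Proof. by rewrite /= !ffunE !eqxx. Qed.

Definition Bid (n : nat) : Bhom n n :=
  exist (fun f : {ffun pt n -> pt n} => (f bot == bot) && (f top == top)) _ (Bid_proof n).

Lemma Bcomp_proof l m n (g : Bhom m n) (f : Bhom l m) :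
  let h := [ffun i : pt l => val g (val f i)] in (h bot == bot) && (h top == top).
Proof.
case: g => g /= /andP[/eqP g0 /eqP g1]; case: f => f /= /andP[/eqP f0 /eqP f1].
by rewrite !ffunE f0 f1 g0 g1 !eqxx.
Qed.

Definition Bcomp l m n (g : Bhom m n) (f : Bhom l m) : Bhom l n :=
  exist (fun h : {ffun pt l -> pt n} => (h bot == bot) && (h top == top)) _
        (Bcomp_proof g f).

Lemma BcompA k l m n (h : Bhom m n) (g : Bhom l m) (f : Bhom k l) :
  Bcomp h (Bcomp g f) = Bcomp (Bcomp h g) f.
Proof. by apply: Bhom_eq => i /=; rewrite !ffunE. Qed.

Lemma Bcomp_id_l m n (f : Bhom m n) : Bcomp (Bid n) f = f.
Proof. by apply: Bhom_eq => i /=; rewrite !ffunE. Qed.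

Lemma Bcomp_id_r m n (f : Bhom m n) : Bcomp f (Bid m) = f.
Proof. by apply: Bhom_eq => i /=; rewrite !ffunE. Qed.

(* Cartesian cubical sets: presheaves on C_x = B^op, i.e. covariant        *)
(* functors B -> Type.                                                      *)

Record cset := CSet {
  cs_ob :> nat -> Type;
  cs_act : forall m n, Bhom m n -> cs_ob m -> cs_ob n;
  cs_act_id : forall n (x : cs_ob n), cs_act (Bid n) x = x;
  cs_act_comp : forall l m n (g : Bhom m n) (f : Bhom l m) (x : cs_ob l),
      cs_act (Bcomp g f) x = cs_act g (cs_act f x)
}.

Definition natural (X Y : cset) (phi : forall n, X n -> Y n) : Prop :=
  forall m n (f : Bhom m n) (x : X m),
    phi n (@cs_act X _ _ f x) = @cs_act Y _ _ f (phi m x).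

Definition cset_iso (X Y : cset) : Prop :=
  exists (phi : forall n, X n -> Y n) (psi : forall n, Y n -> X n),
    [/\ natural phi, natural psi,
        (forall n (x : X n), psi n (phi n x) = x) &
        (forall n (y : Y n), phi n (psi n y) = y)].

(* representable presheaf y[k] = C_x(-, [k]) = B([k], -) *)
Definition yoneda (k : nat) : cset :=
  @CSet (fun n => Bhom k n) (fun m n g f => Bcomp g f)
        (fun n f => Bcomp_id_l f)
        (fun l m n g f x => esym (BcompA g f x)).

Definition Icube : cset := yoneda 1.

Definition Term : cset :=
  @CSet (fun _ => unit) (fun _ _ _ x => x) (fun _ _ => erefl) (fun _ _ _ _ _ _ => erefl).

Definition cop_act (X Y : cset) m n (f : Bhom m n) (z : X m + Y m) : X n + Y n :=
  match z with inl x => inl (@cs_act X _ _ f x) | inr y => inr (@cs_act Y _ _ f y) end.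

Lemma cop_act_id (X Y : cset) n (z : X n + Y n) : cop_act (Bid n) z = z.
Proof. by case: z => x /=; rewrite cs_act_id. Qed.

Lemma cop_act_comp (X Y : cset) l m n (g : Bhom m n) (f : Bhom l m) (z : X l + Y l) :
  cop_act (Bcomp g f) z = cop_act g (cop_act f z).
Proof. by case: z => x /=; rewrite cs_act_comp. Qed.

Definition Coprod (X Y : cset) : cset :=
  @CSet (fun n => (X n + Y n)%type) (@cop_act X Y)
        (@cop_act_id X Y) (@cop_act_comp X Y).

(* exponential: (Y^X)([n]) = Nat(y[n] x X, Y), naturality over B *)
Definition exp_ob (X Y : cset) (n : nat) :=
  {eta : forall m, Bhom n m -> X m -> Y m |
     forall m p (g : Bhom m p) (f : Bhom n m) (x : X m),
       eta p (Bcomp g f) (@cs_act X _ _ g x) = @cs_act Y _ _ g (eta m f x)}.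

Lemma exp_eq (X Y : cset) n (e1 e2 : exp_ob X Y n) : proj1_sig e1 = proj1_sig e2 -> e1 = e2.
Proof.
case: e1 => a pa; case: e2 => b pb /= eab; subst b.
by rewrite (proof_irrelevance _ pa pb).
Qed.

Lemma exp_act_proof (X Y : cset) n n' (h : Bhom n n') (e : exp_ob X Y n) :
  forall m p (g : Bhom m p) (f : Bhom n' m) (x : X m),
    proj1_sig e p (Bcomp (Bcomp g f) h) (@cs_act X _ _ g x)
    = @cs_act Y _ _ g (proj1_sig e m (Bcomp f h) x).
Proof. by move=> m p g f x; rewrite -BcompA (svalP e). Qed.

Definition exp_act (X Y : cset) n n' (h : Bhom n n') (e : exp_ob X Y n)
  : exp_ob X Y n' :=
  exist _ (fun m f x => proj1_sig e m (Bcomp f h) x) (exp_act_proof h e).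

Lemma exp_act_id (X Y : cset) n (e : exp_ob X Y n) : exp_act (Bid n) e = e.
Proof.
apply: exp_eq => /=.
apply: functional_extensionality_dep => m.
apply: functional_extensionality => f.
by rewrite Bcomp_id_r.
Qed.

Lemma exp_act_comp (X Y : cset) l m n (g : Bhom m n) (f : Bhom l m)
  (e : exp_ob X Y l) : exp_act (Bcomp g f) e = exp_act g (exp_act f e).
Proof.
apply: exp_eq => /=.
apply: functional_extensionality_dep => p.
apply: functional_extensionality => h.
by rewrite BcompA.
Qed.

Definition Exp (X Y : cset) : cset :=
  @CSet (exp_ob X Y) (@exp_act X Y) (@exp_act_id X Y) (@exp_act_comp X Y).

(* A section of I^I over [n] is a natural family of maps B([n],[m]) x I[m] -> I[m].
   Since [n.+1] is the coproduct of [n] and [1] in bipointed sets, naturality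
   determines it by its value w on the generic pair (weakening, fresh variable),
   a map [1] -> [n.+1], i.e. a point w(x1) of [n.+1]: either the fresh variable
   (the section is the projection, the summand 1) or a point of [n] (the section
   is constant, the summand I). *)

From mathcomp Require Import all_boot.
From Stdlib Require Import FunctionalExtensionality.

Set Implicit Arguments.
Unset Strict Implicit.
Unset Printing Implicit Defensive.

Lemma mkB_proof m n (f : pt m -> pt n) :
  f bot = bot -> f top = top ->
  let g := [ffun i => f i] in (g bot == bot) && (g top == top).
Proof. by move=> f0 f1 /=; rewrite !ffunE f0 f1 !eqxx. Qed.

Definition mkB m n (f : pt m -> pt n) (f0 : f bot = bot) (f1 : f top = top) :
  Bhom m n := exist _ [ffun i => f i] (mkB_proof f0 f1).

Lemma Bhom_bot m n (f : Bhom m n) : val f bot = bot.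
Proof. by case: f => f /= /andP[/eqP -> _]. Qed.

Lemma Bhom_top m n (f : Bhom m n) : val f top = top.
Proof. by case: f => f /= /andP[_ /eqP ->]. Qed.

Definition x1 : pt 1 := Ordinal (isT : 1 < 3).

Lemma pt1P (i : pt 1) : [\/ i = bot, i = x1 | i = top].
Proof.
by case: i => -[|[|[|//]]] lti; [apply: Or31 | apply: Or32 | apply: Or33];
  apply: val_inj.
Qed.

Lemma eq_Bhom1 m (f g : Bhom 1 m) : val f x1 = val g x1 -> f = g.
Proof.
move=> fg; apply: Bhom_eq => i.
by case: (pt1P i) => ->; rewrite ?Bhom_bot ?Bhom_top.
Qed.

Definition fresh n : pt n.+1 := Ordinal (leqnSn n.+2).

Lemma top_neq_fresh n : (top : pt n.+1) != fresh n.
Proof. by apply/eqP => /(congr1 val) /succn_inj/esym/n_Sn. Qed.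

Definition weak n (i : pt n) : pt n.+1 :=
  if i == top then top else widen_ord (leqnSn _) i.

Lemma weak_bot n : weak (bot : pt n) = bot.
Proof. by rewrite /weak /=; apply: val_inj. Qed.

Lemma weak_top n : weak (top : pt n) = top.
Proof. by rewrite /weak eqxx. Qed.

Lemma weak_neq_fresh n (i : pt n) : weak i != fresh n.
Proof.
rewrite /weak; have [_|i_top] := eqVneq i top; first exact: top_neq_fresh.
by apply: contraNneq i_top => /(congr1 val) /= i_n1; apply/eqP/val_inj.
Qed.

Definition Bweak n : Bhom n n.+1 := mkB (@weak_bot n) (@weak_top n).

Definition fresh_map n (i : pt 1) : pt n.+1 :=
  if i == bot then bot else if i == top then top else fresh n.

Lemma fresh_map_bot n : fresh_map n bot = bot.
Proof. by rewrite /fresh_map eqxx. Qed.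

Lemma fresh_map_top n : fresh_map n top = top.
Proof. by rewrite /fresh_map eqxx. Qed.

Definition Bfresh n : Bhom 1 n.+1 := mkB (@fresh_map_bot n) (@fresh_map_top n).

Lemma Bfresh_x1 n : val (Bfresh n) x1 = fresh n.
Proof. by rewrite ffunE. Qed.

(* The copairing of the coproduct [n.+1] = [n] + [1], with injections [Bweak n]
   and [Bfresh n]. *)
Definition copair n m (f : Bhom n m) (c : pt m) (i : pt n.+1) : pt m :=
  if i == fresh n then c else if i == top then top else val f (inord i).

Lemma copair_bot n m (f : Bhom n m) c : copair f c bot = bot.
Proof.
rewrite /copair /= -[RHS](Bhom_bot f); congr (val f _).
by apply: val_inj; rewrite /= inordK.
Qed.

Lemma copair_top n m (f : Bhom n m) c : copair f c top = top.
Proof. by rewrite /copair (negbTE (top_neq_fresh n)) eqxx. Qed.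

Definition Bpair n m (f : Bhom n m) (c : pt m) : Bhom n.+1 m :=
  mkB (copair_bot f c) (copair_top f c).

Lemma Bpair_fresh_pt n m (f : Bhom n m) c : val (Bpair f c) (fresh n) = c.
Proof. by rewrite ffunE /copair eqxx. Qed.

Lemma Bpair_weak n m (f : Bhom n m) c : Bcomp (Bpair f c) (Bweak n) = f.
Proof.
apply: Bhom_eq => i; rewrite /= !ffunE /copair (negbTE (weak_neq_fresh i)).
rewrite /weak; have [->|i_top] := eqVneq i top; first by rewrite eqxx Bhom_top.
rewrite ifF; last first.
  by apply/negbTE/eqP => /(congr1 val) /= i_n2; have := ltn_ord i; rewrite i_n2 ltnn.
by congr (val f _); apply: val_inj; rewrite /= inordK.
Qed.

Lemma Bpair_fresh n m (f : Bhom n m) (x : Bhom 1 m) :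
  Bcomp (Bpair f (val x x1)) (Bfresh n) = x.
Proof. by apply: eq_Bhom1; rewrite /= ffunE Bfresh_x1 Bpair_fresh_pt. Qed.

Lemma Bcomp_Bpair k n m (g : Bhom m k) (f : Bhom n m) c :
  Bcomp g (Bpair f c) = Bpair (Bcomp g f) (val g c).
Proof.
apply: Bhom_eq => i; rewrite /= !ffunE /copair.
by case: eqP => // _; case: eqP => [_|_]; rewrite ?Bhom_top ?ffunE.
Qed.

(* Naturality of [e] along [Bpair f (val x x1)], which sends the generic pair
   [(Bweak n, Bfresh n)] to [(f, x)]. *)
Lemma exp_generic (Y : cset) n (e : exp_ob Icube Y n) m (f : Bhom n m) (x : Bhom 1 m) :
  sval e m f x
  = @cs_act Y _ _ (Bpair f (val x x1)) (sval e n.+1 (Bweak n) (Bfresh n)).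
Proof.
by have := svalP e _ _ (Bpair f (val x x1)) (Bweak n) (Bfresh n);
  rewrite /= Bpair_weak Bpair_fresh.
Qed.

Lemma natural_inverse (X Y : cset) (phi : forall n, X n -> Y n) (psi : forall n, Y n -> X n) :
  natural psi -> (forall n, cancel (phi n) (psi n)) -> (forall n, cancel (psi n) (phi n)) ->
  natural phi.
Proof. by move=> psi_nat phiK psiK m n f x; rewrite -{1}(phiK _ x) -psi_nat psiK. Qed.

Definition exp_const n (a : Bhom 1 n) : exp_ob Icube Icube n.
Proof. by exists (fun m f _ => Bcomp f a) => m p g f _; rewrite /= BcompA. Defined.

Definition exp_proj n : exp_ob Icube Icube n.
Proof. by exists (fun m _ x => x). Defined.

Definition Bstrip n : Bhom n.+1 n := Bpair (Bid n) bot.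

Definition exp_to_cop n (e : Exp Icube Icube n) : Coprod Icube Term n :=
  let w := sval e n.+1 (Bweak n) (Bfresh n) in
  if val w x1 == fresh n then inr tt else inl (Bcomp (Bstrip n) w).

Definition cop_to_exp n (z : Coprod Icube Term n) : Exp Icube Icube n :=
  if z is inl a then exp_const a else exp_proj n.

Lemma cop_to_exp_natural : natural cop_to_exp.
Proof.
move=> m n f [a|[]]; apply: exp_eq => //=.
apply: functional_extensionality_dep => p; apply: functional_extensionality => g.
by apply: functional_extensionality => x; rewrite BcompA.
Qed.

Lemma cop_to_expK n : cancel (@cop_to_exp n) (@exp_to_cop n).
Proof.
case=> [a|[]]; rewrite /exp_to_cop /=; last by rewrite Bfresh_x1 eqxx.
rewrite !ffunE (negbTE (weak_neq_fresh _)).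
by rewrite BcompA Bpair_weak Bcomp_id_l.
Qed.

Lemma exp_to_copK n : cancel (@exp_to_cop n) (@cop_to_exp n).
Proof.
move=> e; apply: exp_eq.
apply: functional_extensionality_dep => m; apply: functional_extensionality => f.
apply: functional_extensionality => x; rewrite [RHS]exp_generic /exp_to_cop.
set w := sval e n.+1 (Bweak n) (Bfresh n).
have [w_fresh|w_old] := eqVneq (val w x1) (fresh n); apply: eq_Bhom1.
  by rewrite /= !ffunE w_fresh /copair eqxx.
rewrite [sval _]/= /Bstrip BcompA Bcomp_Bpair Bcomp_id_r Bhom_bot /=.
by rewrite !ffunE /copair (negbTE w_old).
Qed.

Theorem lemma2p5 : cset_iso (Exp Icube Icube) (Coprod Icube Term).
Proof.
exists exp_to_cop, cop_to_exp; split.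
- exact: natural_inverse cop_to_exp_natural exp_to_copK cop_to_expK.
- exact: cop_to_exp_natural.
- exact: exp_to_copK.
- exact: cop_to_expK.
Qed.
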